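(* Let $G=\mathrm{SL}_3(\mathbb{R})$, $U=U_3(\mathbb{R})$, $\Gamma=\mathrm{SL}_3(\mathbb{Z})$ acting on $G/U$ by left multiplication. Then: (1) if $g\in P_+$, the stabilizer of $gU$ in $\Gamma$ is $H_3(\mathbb{Z})$; (2) if $g\in P_{i,+}\setminus\Gamma P$ for $i\in\{1,2\}$, the stabilizer of $gU$ is $\Gamma_i$; (3) if $g\in G\setminus(\Gamma P_1\cup\Gamma P_2)$, the stabilizer of $gU$ is trivial.
   Context: $U_3(\mathbb{R})$: unipotent upper triangular matrices. $P$: upper triangular matrices in $G$; $P_+\subset P$: those with positive diagonal entries. $P_1$: matrices in $G$ with $g_{31}=g_{32}=0$; $P_{1,+}\subset P_1$: those with $g_{33}>0$. $P_2$: matrices in $G$ with $g_{21}=g_{31}=0$; $P_{2,+}\subset P_2$: those with $g_{11}>0$. $H_3(\mathbb{Z})=\Gamma\cap U$ (integer unipotent upper triangular matrices); $\Gamma_1=\{I+aE_{13}+bE_{23}: a,b\in\mathbb{Z}\}$; $\Gamma_2=\{I+aE_{12}+bE_{13}: a,b\in\mathbb{Z}\}$, with $E_{ij}$ matrix units. *)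

From HB Require Import structures.
From mathcomp Require Import all_boot all_order all_algebra.
From mathcomp Require Import reals.
Set Implicit Arguments. Unset Strict Implicit. Unset Printing Implicit Defensive.
Import Order.TTheory GRing.Theory Num.Theory.
Local Open Scope ring_scope.

(* 0-based indices: i0,i1,i2 correspond to the paper's indices 1,2,3 *)
Definition i0 : 'I_3 := @Ordinal 3 0 isT.
Definition i1 : 'I_3 := @Ordinal 3 1 isT.
Definition i2 : 'I_3 := @Ordinal 3 2 isT.

Section Defs.
Variable R : realType.

Definition inSL3 (g : 'M[R]_3) : Prop := \det g = 1.

Definition inU (u : 'M[R]_3) : Prop :=
  (forall i j : 'I_3, (j < i)%N -> u i j = 0) /\ (forall i : 'I_3, u i i = 1).

Definition is_intR (x : R) : Prop := exists z : int, x = z%:~R.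

Definition inGamma (g : 'M[R]_3) : Prop :=
  inSL3 g /\ (forall i j : 'I_3, is_intR (g i j)).

Definition inP (g : 'M[R]_3) : Prop :=
  inSL3 g /\ (forall i j : 'I_3, (j < i)%N -> g i j = 0).
Definition inPplus (g : 'M[R]_3) : Prop :=
  inP g /\ (forall i : 'I_3, 0 < g i i).

Definition inP1 (g : 'M[R]_3) : Prop :=
  inSL3 g /\ g i2 i0 = 0 /\ g i2 i1 = 0.
Definition inP1plus (g : 'M[R]_3) : Prop := inP1 g /\ 0 < g i2 i2.

Definition inP2 (g : 'M[R]_3) : Prop :=
  inSL3 g /\ g i1 i0 = 0 /\ g i2 i0 = 0.
Definition inP2plus (g : 'M[R]_3) : Prop := inP2 g /\ 0 < g i0 i0.

Definition inGammaTimes (S : 'M[R]_3 -> Prop) (g : 'M[R]_3) : Prop :=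
  exists gam s, inGamma gam /\ S s /\ g = gam *m s.

Definition inH3Z (g : 'M[R]_3) : Prop := inGamma g /\ inU g.

Definition inGamma1 (g : 'M[R]_3) : Prop :=
  exists a b : int, g = 1%:M + a%:~R *: delta_mx i0 i2 + b%:~R *: delta_mx i1 i2.
Definition inGamma2 (g : 'M[R]_3) : Prop :=
  exists a b : int, g = 1%:M + a%:~R *: delta_mx i0 i1 + b%:~R *: delta_mx i0 i2.

Definition inStab (g gam : 'M[R]_3) : Prop :=
  inGamma gam /\ exists u, inU u /\ gam *m g = g *m u.

End Defs.

From HB Require Import structures.
From mathcomp Require Import all_boot all_order all_algebra.
From mathcomp Require Import reals ring lra.
Set Implicit Arguments. Unset Strict Implicit. Unset Printing Implicit Defensive.
Import Order.TTheory GRing.Theory Num.Theory.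
Local Open Scope ring_scope.

(* A matrix gam stabilizes gU iff u = g^-1 gam g lies in U; write u = 1 + N with
   N = a E12 + b E13 + c E23.  Then gam - 1 = g N g^-1 and (gam - 1)^2 = g N^2 g^-1,
   where N^2 = a c E13, are integral.  If c = 0 and N <> 0, or if a c <> 0, one of
   them is a nonzero integral matrix of the form (g e1) r, so g e1 is a real
   multiple of an integral vector; completing that vector to a matrix of SL_3(Z)
   puts g in Gamma P2, and even in Gamma P when g is already in P1.  The
   automorphism g |-> w g^-T w (w the antidiagonal permutation matrix) preserves
   Gamma, U and P, exchanges P1 and P2 and turns (a, c) into (-c, -a); so c <> 0
   puts g in Gamma P1.  This gives (3) and (2) for i = 1, and the automorphism
   carries (2) from i = 1 to i = 2.  For (1), conjugation by an upper triangular
   matrix preserves U. *)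

Lemma ord3P (i : 'I_3) : [\/ i = i0, i = i1 | i = i2].
Proof.
by case: i => [[|[|[|//]]] ?]; [constructor 1 | constructor 2 | constructor 3];
  apply: val_inj.
Qed.

Lemma mul3E (T : pzSemiRingType) (A B : 'M[T]_3) i j :
  (A *m B) i j = A i i0 * B i0 j + A i i1 * B i1 j + A i i2 * B i2 j.
Proof.
rewrite mxE !big_ord_recl big_ord0 addr0 addrA.
by congr (A i _ * B _ j + A i _ * B _ j + A i _ * B _ j); apply: val_inj.
Qed.

Lemma col_complete n (z : 'cV[int]_n.+1) :
  exists (M : 'M[int]_n.+1) (c : int), \det M = 1 /\ z = c *: col 0 M.
Proof.
have [L uL [Rm _ [d _ E]]] := int_Smith_normal_form z.
have zE : z = (d`_0 * Rm 0 0) *: col 0 L.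
  apply/matrixP => i j; rewrite (ord1 j) E !mxE big_ord1 !mxE big_ord_recl big1.
    by rewrite !mxE /= mulr1n addr0; ring.
  by move=> k _; rewrite !mxE /= mulr0n mulr0.
move: uL; rewrite unitmxE unfold_in /= => /orP[/eqP detL | /eqP detL].
  by exists L, (d`_0 * Rm 0 0).
pose D : 'rV[int]_n.+1 := \row_j (if j == 0 then -1 else 1).
exists (L *m diag_mx D), (- (d`_0 * Rm 0 0)); split.
  rewrite det_mulmx det_diag big_ord_recl big1 => [|k _]; last by rewrite mxE.
  by rewrite detL mxE /=; ring.
rewrite zE; apply/matrixP => i j; rewrite !mxE big_ord_recl big1.
  by rewrite !mxE /= addr0; ring.
by move=> k _; rewrite !mxE /= mulr0n mulr0.
Qed.

Lemma col_complete_block (x y : int) :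
  exists (M : 'M[int]_3) (c : int), [/\ \det M = 1, M i2 i0 = 0, M i2 i1 = 0,
    x = c * M i0 i0 & y = c * M i1 i0].
Proof.
have [M2 [c [D E]]] := col_complete (\col_(i < 2) (if i == 0 then x else y)).
exists (block_mx M2 0 0 1%:M : 'M_(2 + 1)), c.
have -> : i0 = lshift 1 (0 : 'I_2) by apply: val_inj.
have -> : i1 = lshift 1 (1 : 'I_2) by apply: val_inj.
have -> : i2 = rshift 2 (0 : 'I_1) by apply: val_inj.
rewrite !(@block_mxEdl _ 2 1 2 1) !(@block_mxEul _ 2 1 2 1) !mxE.
split=> //.
- by rewrite (@det_ublock _ 2 1) det1 mulr1.
- by move/matrixP/(_ 0 0): E; rewrite !mxE.
- by move/matrixP/(_ 1 0): E; rewrite !mxE.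
Qed.

Definition unip (T : pzRingType) (a b c : T) : 'M[T]_3 :=
  1%:M + a *: delta_mx i0 i1 + b *: delta_mx i0 i2 + c *: delta_mx i1 i2.

Lemma det_unip (T : comNzRingType) (a b c : T) : \det (unip a b c) = 1.
Proof.
rewrite -det_tr det_trig.
  by apply: big1 => i _; case: (ord3P i) => ->; rewrite !mxE /= !mulr0 !addr0.
by apply/is_trig_mxP => i j; case: (ord3P i) => ->; case: (ord3P j) => -> // _;
  rewrite !mxE /= !mulr0 !addr0.
Qed.

Lemma map_unip (T T' : pzRingType) (f : {rmorphism T -> T'}) (a b c : T) :
  map_mx f (unip a b c) = unip (f a) (f b) (f c).
Proof. by rewrite /unip !(map_mxD, map_mxZ) map_mx1 !map_delta_mx. Qed.

Section RealMatrices.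
Variable R : realType.
Local Notation realmx := (map_mx (intr : int -> R)).
Implicit Types (a b c x y : R) (g h gam p q u : 'M[R]_3).

Definition scaled_int m n (A : 'M[R]_(m, n)) :=
  exists (l : R) (Z : 'M[int]_(m, n)), A = l *: realmx Z.

Lemma is_intR_map m n (Z : 'M[int]_(m, n)) i j : is_intR (realmx Z i j).
Proof. by rewrite mxE; exists (Z i j). Qed.

Lemma is_intR_floor x : is_intR x -> x = (Num.floor x)%:~R.
Proof. by case=> z ->; rewrite intrKfloor. Qed.

Lemma inGammaE g :
  inGamma g <-> exists M : 'M[int]_3, \det M = 1 /\ g = realmx M.
Proof.
split=> [[detg gZ] | [M [detM ->]]].
  have gE : g = realmx (\matrix_(i, j) Num.floor (g i j)).
    by apply/matrixP => i j; rewrite !mxE -is_intR_floor.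
  exists (\matrix_(i, j) Num.floor (g i j)); split=> //.
  by apply/eqP; rewrite -(eqr_int R) -det_map_mx -gE detg.
split; last exact: is_intR_map.
by rewrite /inSL3 det_map_mx detM.
Qed.

Lemma invmx_det1 n (A : 'M[R]_n) : \det A = 1 -> invmx A = \adj A.
Proof. by move=> detA; rewrite /invmx unitmxE detA unitr1 invr1 scale1r. Qed.

Lemma unitmx_det1 n (A : 'M[R]_n) : \det A = 1 -> A \in unitmx.
Proof. by move=> detA; rewrite unitmxE detA unitr1. Qed.

Lemma invmx_uniq n (A B : 'M[R]_n) : A *m B = 1%:M -> invmx A = B.
Proof. by move=> AB; have [uA _] := mulmx1_unit AB; rewrite -[invmx A]mulmx1 -AB mulKmx. Qed.

Lemma invmxM n (A B : 'M[R]_n) : A \in unitmx -> B \in unitmx ->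
  invmx (A *m B) = invmx B *m invmx A.
Proof.
by move=> uA uB; apply: invmx_uniq; rewrite mulmxA -(mulmxA A) mulmxV // mulmx1 mulmxV.
Qed.

Lemma rank_one_scaled_int m n (Z : 'M[int]_(m, n)) (x : 'cV[R]_m) (y : 'rV[R]_n) :
  realmx Z = x *m y -> x *m y != 0 -> scaled_int x.
Proof.
move=> ZE /matrix0Pn[i [j]]; rewrite -ZE mxE intr_eq0 => Zij.
have xyE : col j (x *m y) = y 0 j *: x.
  by apply/matrixP => k l; rewrite (ord1 l) !mxE big_ord1 mulrC.
have yj : y 0 j != 0.
  apply: contra Zij => /eqP y0; rewrite -(intr_eq0 R).
  by move/matrixP/(_ i j): ZE; rewrite !mxE big_ord1 y0 mulr0 => ->.
exists (y 0 j)^-1, (col j Z).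
by rewrite map_col ZE xyE scalerA mulVf ?scale1r.
Qed.

Lemma conj_scaled_int_col n (g N : 'M[R]_n) (Z : 'M[int]_n) k :
  g \in unitmx -> (forall i j, i != k -> N i j = 0) -> N != 0 ->
  realmx Z = g *m N *m invmx g -> scaled_int (col k g).
Proof.
move=> ug N0 Nnz ZE.
have NE : N = col k 1%:M *m row k N.
  apply/matrixP => i j; rewrite !mxE big_ord1 !mxE.
  by case: eqVneq => [->|/N0->]; rewrite ?mul1r ?mul0r.
have conjE : g *m N *m invmx g = col k g *m (row k N *m invmx g).
  by rewrite [in LHS]NE colE mul1mx !mulmxA -colE.
apply: (rank_one_scaled_int (etrans ZE conjE)); rewrite -conjE.
apply: contraNneq Nnz => conj0.
have -> : N = invmx g *m (g *m N *m invmx g) *m g.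
  by rewrite !mulmxA mulVmx // mul1mx mulmxKV.
by rewrite conj0 mulmx0 mul0mx.
Qed.

Lemma inU_unip u : inU u <-> exists a b c : R, u = unip a b c.
Proof.
split=> [[low diag] | [a [b [c ->]]]].
  have [u10 u20 u21] : [/\ u i1 i0 = 0, u i2 i0 = 0 & u i2 i1 = 0] by split; apply: low.
  exists (u i0 i1), (u i0 i2), (u i1 i2); apply/matrixP => i j.
  by case: (ord3P i) => ->; case: (ord3P j) => ->; rewrite !mxE /= ?diag ?u10 ?u20 ?u21; ring.
split=> [i j|i]; last by case: (ord3P i) => ->; rewrite !mxE /=; ring.
by case: (ord3P i) => ->; case: (ord3P j) => -> // _; rewrite !mxE /=; ring.
Qed.

Lemma unip_mul a b c a' b' c' :
  unip a b c *m unip a' b' c' = unip (a + a') (b + b' + a * c') (c + c').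
Proof.
apply/matrixP => i j; rewrite mul3E.
by case: (ord3P i) => ->; case: (ord3P j) => ->; rewrite !mxE /=; ring.
Qed.

Lemma unip0 : unip 0 0 0 = 1%:M :> 'M[R]_3.
Proof. by rewrite /unip !scale0r !addr0. Qed.

Lemma unip_sub1_sqr a b c :
  (unip a b c - 1%:M) *m (unip a b c - 1%:M) = (a * c) *: delta_mx i0 i2.
Proof.
apply/matrixP => i j; rewrite mul3E.
by case: (ord3P i) => ->; case: (ord3P j) => ->; rewrite !mxE /=; ring.
Qed.

Lemma conj_sub1 g gam u : g \in unitmx ->
  gam *m g = g *m u -> gam - 1%:M = g *m (u - 1%:M) *m invmx g.
Proof. by move=> ug E; rewrite mulmxBr mulmx1 mulmxBl -E mulmxK ?mulmxV. Qed.

Lemma stab_scaled_int_col0_c0 g gam a b :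
  \det g = 1 -> inGamma gam -> gam *m g = g *m unip a b 0 -> gam != 1%:M ->
  scaled_int (col i0 g).
Proof.
move=> detg /inGammaE[M [_ gamE]] E gam1; have ug := unitmx_det1 detg.
apply: (@conj_scaled_int_col _ g (unip a b 0 - 1%:M) (M - 1%:M) i0 ug).
- move=> i j; case: (ord3P i) => -> // _;
    by case: (ord3P j) => ->; rewrite !mxE /=; ring.
- apply: contraNneq gam1 => /eqP; rewrite subr_eq0 => /eqP u1.
  by rewrite -[gam](mulmxK ug) E u1 mulmx1 mulmxV.
- by rewrite map_mxB map_mx1 -gamE (conj_sub1 ug E).
Qed.

Lemma stab_scaled_int_col0 g gam a b c :
  \det g = 1 -> inGamma gam -> gam *m g = g *m unip a b c -> a != 0 ->
  scaled_int (col i0 g).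
Proof.
move=> detg Ggam E a0; have ug := unitmx_det1 detg.
have [c0|c0] := eqVneq c 0.
  apply: (stab_scaled_int_col0_c0 detg Ggam (etrans E _)); first by rewrite c0.
  apply: contraNneq a0 => gam1; move: E; rewrite gam1 mul1mx.
  move/(congr1 (mulmx (invmx g))); rewrite mulVmx // mulKmx // => /matrixP/(_ i0 i1).
  by rewrite !mxE /=; lra.
have [M [_ gamE]] := (inGammaE gam).1 Ggam.
apply: (@conj_scaled_int_col _ g ((a * c) *: delta_mx i0 i2)
  ((M - 1%:M) *m (M - 1%:M)) i0 ug).
- by move=> i j; case: (ord3P i) => -> // _; rewrite !mxE /= mulr0.
- apply: contra_neq (mulf_neq0 a0 c0) => /matrixP/(_ i0 i2).
  by rewrite !mxE /= mulr1.
- rewrite map_mxM map_mxB map_mx1 -gamE (conj_sub1 ug E) -(unip_sub1_sqr a b c).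
  by rewrite !mulmxA mulmxKV.
Qed.

Lemma inP_P1P2 g : inP g <-> inP1 g /\ inP2 g.
Proof.
split=> [[detg low] | [[detg [g20 g21]] [_ [g10 _]]]].
  by split; (split; [|split]) => //; exact: low.
split=> // i j; case: (ord3P i) => ->; case: (ord3P j) => -> //.
Qed.

Lemma inP1_inv g : inP1 g -> inP1 (invmx g).
Proof.
move=> [detg [g20 g21]]; have ug := unitmx_det1 detg.
have gi j : g i2 i2 * invmx g i2 j = (i2 == j)%:R.
  by move/matrixP/(_ i2 j): (mulmxV ug); rewrite mul3E g20 g21 !mul0r !add0r mxE.
have g22 : g i2 i2 != 0.
  by apply: contra_eq_neq (gi i2) => ->; rewrite mul0r eqxx eq_sym oner_eq0.
split; first by rewrite /inSL3 det_inv detg invr1.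
by split; apply: (mulfI g22); rewrite gi mulr0.
Qed.

Lemma inP2_inv g : inP2 g -> inP2 (invmx g).
Proof.
move=> [detg [g10 g20]]; have ug := unitmx_det1 detg.
have gi i : invmx g i i0 * g i0 i0 = (i == i0)%:R.
  by move/matrixP/(_ i i0): (mulVmx ug); rewrite mul3E g10 g20 !mulr0 !addr0 mxE.
have g00 : g i0 i0 != 0.
  by apply: contra_eq_neq (gi i0) => ->; rewrite mulr0 eqxx eq_sym oner_eq0.
split; first by rewrite /inSL3 det_inv detg invr1.
by split; apply: (mulIf g00); rewrite gi mul0r.
Qed.

Lemma inP_inv g : inP g -> inP (invmx g).
Proof. by rewrite !inP_P1P2 => -[/inP1_inv ? /inP2_inv ?]. Qed.

Lemma inP1M g h : inP1 g -> inP1 h -> inP1 (g *m h).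
Proof.
move=> [detg [g20 g21]] [deth [h20 h21]].
split; first by rewrite /inSL3 det_mulmx detg deth mulr1.
by split; rewrite mul3E g20 g21 ?h20 ?h21 !mul0r ?mulr0 !add0r.
Qed.

Lemma col_invmx_mul n (gam g : 'M[R]_n) j (k : R) : gam \in unitmx ->
  col j g = k *: col j gam -> col j (invmx gam *m g) = k *: col j 1%:M.
Proof.
by move=> ugam E; rewrite !colE -mulmxA -colE E -scalemxAr colE mulmxA mulVmx.
Qed.

Lemma inP2_invmx_mul g gam (k : R) : inSL3 g -> inSL3 gam ->
  col i0 g = k *: col i0 gam -> inP2 (invmx gam *m g).
Proof.
move=> detg detgam /(col_invmx_mul (unitmx_det1 detgam)) /matrixP E.
split; first by rewrite /inSL3 det_mulmx det_inv detg detgam invr1 mulr1.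
by split; move: (E i1 0) (E i2 0); rewrite !mxE /= mulr0.
Qed.

Lemma GammaP2_of_scaled_int_col0 g :
  inSL3 g -> scaled_int (col i0 g) -> inGammaTimes (@inP2 R) g.
Proof.
move=> detg [l [z zE]]; have [M [c [detM zM]]] := col_complete z.
have {}zM : z = c *: col i0 M by rewrite zM; congr (_ *: col _ _); apply: val_inj.
have Ggam : inGamma (realmx M) by apply/inGammaE; exists M.
exists (realmx M), (invmx (realmx M) *m g); split=> //; split.
  apply: (inP2_invmx_mul (k := l * c%:~R) detg Ggam.1).
  by rewrite zE zM map_mxZ map_col scalerA.
by rewrite mulKVmx // unitmx_det1 //; case: Ggam.
Qed.

Lemma GammaP_of_P1_scaled_int_col0 g :
  inP1 g -> scaled_int (col i0 g) -> inGammaTimes (@inP R) g.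
Proof.
move=> P1g [l [z /matrixP zE]]; have [detg [g20 _]] := P1g.
have gz i : g i i0 = l * (z i 0)%:~R by move: (zE i 0); rewrite !mxE.
have [M [c [detM M20 M21 z0 z1]]] := col_complete_block (z i0 0) (z i1 0).
have Ggam : inGamma (realmx M) by apply/inGammaE; exists M.
have P1gam : inP1 (realmx M) by split; [case: Ggam | rewrite !mxE M20 M21].
exists (realmx M), (invmx (realmx M) *m g); split=> //; split.
  apply/inP_P1P2; split; first exact: inP1M (inP1_inv P1gam) P1g.
  apply: (inP2_invmx_mul (k := l * c%:~R) detg P1gam.1).
  apply/matrixP => i j; rewrite (ord1 j) !mxE.
  by case: (ord3P i) => ->; rewrite ?g20 ?M20 ?gz ?z0 ?z1 ?intrM; ring.
by rewrite mulKVmx // unitmx_det1 //; case: Ggam.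
Qed.

Lemma conj_upper_U p q u :
  inP p -> inP q -> p *m q = 1%:M -> inU u -> inU (p *m u *m q).
Proof.
move=> [_ pl] [_ ql] pq /inU_unip[a [b [c ->]]].
have [p10 p20 p21] : [/\ p i1 i0 = 0, p i2 i0 = 0 & p i2 i1 = 0] by split; apply: pl.
have [q10 q20 q21] : [/\ q i1 i0 = 0, q i2 i0 = 0 & q i2 i1 = 0] by split; apply: ql.
have pqE i : (p *m q) i i = p i i * q i i.
  by case: (ord3P i) => ->; rewrite mul3E ?p10 ?p20 ?p21 ?q10 ?q20 ?q21; ring.
have diagE i : (p *m unip a b c *m q) i i = p i i * q i i.
  by case: (ord3P i) => ->; rewrite !mul3E !mxE /= ?p10 ?p20 ?p21 ?q10 ?q20 ?q21; ring.
split=> [i j|i]; last by rewrite diagE -pqE pq mxE eqxx.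
by case: (ord3P i) => ->; case: (ord3P j) => -> // _;
  rewrite !mul3E !mxE /= ?p10 ?p20 ?p21 ?q10 ?q20 ?q21; ring.
Qed.

Lemma stab_P g : inP g -> forall gam, inStab g gam <-> inH3Z gam.
Proof.
move=> Pg gam; have ug := unitmx_det1 Pg.1; have Pgi := inP_inv Pg.
split=> [[Ggam [u [Uu E]]] | [Ggam Ugam]]; split=> //.
  by rewrite -[gam](mulmxK ug) E; apply: conj_upper_U => //; rewrite mulmxV.
exists (invmx g *m gam *m g); split; last by rewrite !mulmxA mulmxV // mul1mx.
by apply: conj_upper_U => //; rewrite mulVmx.
Qed.

Lemma inGamma_unip (a b c : int) : inGamma (unip a%:~R b%:~R c%:~R : 'M[R]_3).
Proof. by apply/inGammaE; exists (unip a b c); rewrite det_unip map_unip. Qed.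

Lemma inGamma1E gam :
  inGamma1 gam <-> inGamma gam /\ exists x y, gam = unip 0 x y.
Proof.
split=> [[a [b ->]] | [[_ gamZ] [x [y gamE]]]].
  split; last by exists a%:~R, b%:~R; rewrite /unip scale0r addr0.
  by have := inGamma_unip 0 a b; rewrite /unip mulr0z scale0r addr0.
exists (Num.floor x), (Num.floor y).
move: (gamZ i0 i2) (gamZ i1 i2); rewrite gamE !mxE /= !mulr0 !mulr1 !add0r !addr0.
by move=> /is_intR_floor <- /is_intR_floor <-; rewrite /unip scale0r addr0.
Qed.

Lemma inGamma2E gam :
  inGamma2 gam <-> inGamma gam /\ exists x y, gam = unip x y 0.
Proof.
split=> [[a [b ->]] | [[_ gamZ] [x [y gamE]]]].
  split; last by exists a%:~R, b%:~R; rewrite /unip scale0r addr0.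
  by have := inGamma_unip a b 0; rewrite /unip mulr0z scale0r addr0.
exists (Num.floor x), (Num.floor y).
move: (gamZ i0 i1) (gamZ i0 i2); rewrite gamE !mxE /= !mulr0 !mulr1 !add0r !addr0.
by move=> /is_intR_floor <- /is_intR_floor <-; rewrite /unip scale0r addr0.
Qed.

Lemma conj_P1_unip0 p q x y : inP1 p -> inP1 q -> p *m q = 1%:M ->
  exists x' y', p *m unip 0 x y *m q = unip 0 x' y'.
Proof.
move=> [_ [p20 p21]] [_ [q20 q21]] pq.
exists ((p i0 i0 * x + p i0 i1 * y) * q i2 i2), ((p i1 i0 * x + p i1 i1 * y) * q i2 i2).
rewrite /unip !scale0r !addr0 -!addrA mulmxDr mulmxDl mulmx1 pq; congr (_ + _).
apply/matrixP => i j; rewrite !mul3E.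
by case: (ord3P i) => ->; case: (ord3P j) => ->;
  rewrite !mxE /= ?p20 ?p21 ?q20 ?q21; ring.
Qed.

Lemma stab_P1 g : inP1 g -> ~ inGammaTimes (@inP R) g ->
  forall gam, inStab g gam <-> inGamma1 gam.
Proof.
move=> P1g NP gam; have ug := unitmx_det1 P1g.1; have P1gi := inP1_inv P1g.
rewrite inGamma1E; split=> [[Ggam [_ [/inU_unip[a [b [c ->]]] E]]] | [Ggam [x [y gamE]]]].
  have a0 : a = 0.
    apply/eqP; apply: contra_notT NP => a0.
    exact: GammaP_of_P1_scaled_int_col0 P1g (stab_scaled_int_col0 P1g.1 Ggam E a0).
  by split=> //; rewrite -[gam](mulmxK ug) E a0; apply: conj_P1_unip0; rewrite ?mulmxV.
split=> //; have [x' [y' uE]] := conj_P1_unip0 x y P1gi P1g (mulVmx ug).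
exists (unip 0 x' y'); split; first by apply/inU_unip; do 3!eexists.
by rewrite -uE gamE !mulmxA mulmxV // mul1mx.
Qed.

Definition antidiag : 'M[R]_3 := \matrix_(i, j) (i + j == 2)%N%:R.

Definition antitr (A : 'M[R]_3) := antidiag *m A^T *m antidiag.

Lemma antidiagK : antidiag *m antidiag = 1%:M.
Proof.
apply/matrixP => i j; rewrite mul3E.
by case: (ord3P i) => ->; case: (ord3P j) => ->; rewrite !mxE /=; ring.
Qed.

Lemma rev_ord3 : [/\ rev_ord i0 = i2, rev_ord i1 = i1 & rev_ord i2 = i0].
Proof. by split; apply: val_inj. Qed.

Lemma antitrE (A : 'M[R]_3) i j : antitr A i j = A (rev_ord j) (rev_ord i).
Proof.
have [r0 r1 r2] := rev_ord3.
rewrite !mul3E; case: (ord3P i) => ->; case: (ord3P j) => ->;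
  by rewrite !mxE /= ?r0 ?r1 ?r2; ring.
Qed.

Lemma antitrM (A B : 'M[R]_3) : antitr (A *m B) = antitr B *m antitr A.
Proof.
by rewrite /antitr trmx_mul !mulmxA -[_ *m antidiag *m antidiag]mulmxA antidiagK mulmx1.
Qed.

Lemma antitrK (A : 'M[R]_3) : antitr (antitr A) = A.
Proof.
by apply/matrixP => i j; rewrite !antitrE !rev_ordK.
Qed.

Lemma antitr1 : antitr 1%:M = 1%:M.
Proof. by apply/matrixP => i j; rewrite antitrE !mxE (inj_eq rev_ord_inj) eq_sym. Qed.

Lemma det_antitr (A : 'M[R]_3) : \det (antitr A) = \det A.
Proof.
rewrite !det_mulmx det_tr [_ * \det A]mulrC -mulrA -det_mulmx antidiagK det1.
by rewrite mulr1.
Qed.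

Lemma invmx_antitr (A : 'M[R]_3) : A \in unitmx -> invmx (antitr A) = antitr (invmx A).
Proof. by move=> uA; apply: invmx_uniq; rewrite -antitrM mulVmx // antitr1. Qed.

Lemma antitr_invM g h : g \in unitmx -> h \in unitmx ->
  antitr (invmx (g *m h)) = antitr (invmx g) *m antitr (invmx h).
Proof. by move=> ug uh; rewrite invmxM // antitrM. Qed.

Lemma antitr_invK g : g \in unitmx -> antitr (invmx (antitr (invmx g))) = g.
Proof. by move=> ug; rewrite invmx_antitr ?unitmx_inv // invmxK antitrK. Qed.

Lemma antitr_inv_SL g : inSL3 g -> inSL3 (antitr (invmx g)).
Proof. by rewrite /inSL3 det_antitr det_inv => ->; rewrite invr1. Qed.

Lemma antitr_inv_Gamma gam : inGamma gam -> inGamma (antitr (invmx gam)).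
Proof.
move=> /inGammaE[M [detM gamE]].
split; first by apply: antitr_inv_SL; rewrite /inSL3 gamE det_map_mx detM.
move=> i j; rewrite antitrE gamE invmx_det1 ?det_map_mx ?detM // -map_mx_adj.
exact: is_intR_map.
Qed.

Lemma antitr_inv_unip a b c :
  antitr (invmx (unip a b c)) = unip (- c) (a * c - b) (- a).
Proof.
have -> : invmx (unip a b c) = unip (- a) (a * c - b) (- c).
  by apply: invmx_uniq; rewrite unip_mul -unip0; congr unip; ring.
have [r0 r1 r2] := rev_ord3.
apply/matrixP => i j; rewrite antitrE.
by case: (ord3P i) => ->; case: (ord3P j) => ->; rewrite ?r0 ?r1 ?r2 !mxE /=; ring.
Qed.

Lemma antitr_inv_U u : inU u -> inU (antitr (invmx u)).
Proof.
by move=> /inU_unip[a [b [c ->]]]; apply/inU_unip; rewrite antitr_inv_unip; do 3!eexists.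
Qed.

Lemma antitr_inv_P1 g : inP1 g -> inP2 (antitr (invmx g)).
Proof.
move=> /inP1_inv[detgi [gi20 gi21]]; have [r0 r1 r2] := rev_ord3.
split; first by rewrite /inSL3 det_antitr.
by rewrite !antitrE r0 r1 r2.
Qed.

Lemma antitr_inv_P2 g : inP2 g -> inP1 (antitr (invmx g)).
Proof.
move=> /inP2_inv[detgi [gi10 gi20]]; have [r0 r1 r2] := rev_ord3.
split; first by rewrite /inSL3 det_antitr.
by rewrite !antitrE r0 r1 r2.
Qed.

Lemma antitr_inv_P g : inP g -> inP (antitr (invmx g)).
Proof. by rewrite !inP_P1P2 => -[/antitr_inv_P1 ? /antitr_inv_P2 ?]. Qed.

Lemma antitr_inv_conj g gam u : g \in unitmx -> gam \in unitmx -> u \in unitmx ->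
  gam *m g = g *m u ->
  antitr (invmx gam) *m antitr (invmx g) = antitr (invmx g) *m antitr (invmx u).
Proof. by move=> ug ugam uu E; rewrite -!antitr_invM // E. Qed.

Lemma antitr_inv_stab g gam : inSL3 g -> inStab g gam ->
  inStab (antitr (invmx g)) (antitr (invmx gam)).
Proof.
move=> detg [Ggam [u [Uu E]]]; split; first exact: antitr_inv_Gamma.
have uu : u \in unitmx by case/inU_unip: Uu => [a [b [c ->]]]; rewrite unitmx_det1 ?det_unip.
exists (antitr (invmx u)); split; first exact: antitr_inv_U.
by apply: antitr_inv_conj; rewrite // unitmx_det1 //; case: Ggam.
Qed.

Lemma antitr_inv_GammaTimes (S S' : 'M[R]_3 -> Prop) g :
  (forall s, S s -> inSL3 s /\ S' (antitr (invmx s))) ->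
  inGammaTimes S g -> inGammaTimes S' (antitr (invmx g)).
Proof.
move=> SS' [gam [s [Ggam [/SS'[dets S's] ->]]]].
exists (antitr (invmx gam)), (antitr (invmx s)); split; first exact: antitr_inv_Gamma.
by split=> //; rewrite antitr_invM // unitmx_det1 //; case: Ggam.
Qed.

Lemma stab_P2 g : inP2 g -> ~ inGammaTimes (@inP R) g ->
  forall gam, inStab g gam <-> inGamma2 gam.
Proof.
move=> P2g NP gam; have ug := unitmx_det1 P2g.1.
have P1g' := antitr_inv_P2 P2g.
have NP' : ~ inGammaTimes (@inP R) (antitr (invmx g)).
  move/(antitr_inv_GammaTimes (S' := @inP R)) => GP; apply: NP.
  rewrite -(antitr_invK ug); apply: GP => s Ps.
  by split; [case: Ps | exact: antitr_inv_P].
rewrite inGamma2E; split=> [stab | [Ggam [x [y gamE]]]].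
  have := antitr_inv_stab P2g.1 stab; rewrite (stab_P1 P1g' NP') inGamma1E.
  case=> _ [x [y gamE]]; split; first by case: stab.
  exists (- y), (- x).
  rewrite -(antitr_invK (unitmx_det1 stab.1.1)) gamE antitr_inv_unip.
  by congr unip; ring.
rewrite -(antitr_invK ug) -(antitr_invK (unitmx_det1 Ggam.1)).
apply: antitr_inv_stab; first exact: antitr_inv_SL P2g.1.
apply/(stab_P1 P1g' NP')/inGamma1E; split; first exact: antitr_inv_Gamma.
by exists (- y), (- x); rewrite gamE antitr_inv_unip; congr unip; ring.
Qed.

Lemma GammaP1_of_stab g gam a b c : inSL3 g -> inGamma gam ->
  gam *m g = g *m unip a b c -> c != 0 -> inGammaTimes (@inP1 R) g.
Proof.
move=> detg Ggam E c0; have ug := unitmx_det1 detg.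
rewrite -(antitr_invK ug).
apply: (antitr_inv_GammaTimes (S := @inP2 R)) => [s P2s|].
  by split; [case: P2s | exact: antitr_inv_P2].
have E' : antitr (invmx gam) *m antitr (invmx g) =
          antitr (invmx g) *m unip (- c) (a * c - b) (- a).
  rewrite -antitr_inv_unip; apply: antitr_inv_conj E; rewrite // unitmx_det1 ?det_unip //.
  by case: Ggam.
apply: (GammaP2_of_scaled_int_col0 (antitr_inv_SL detg)).
apply: (stab_scaled_int_col0 (antitr_inv_SL detg) (antitr_inv_Gamma Ggam) E').
by rewrite oppr_eq0.
Qed.

Lemma stab_trivial g : inSL3 g ->
  ~ inGammaTimes (@inP1 R) g -> ~ inGammaTimes (@inP2 R) g ->
  forall gam, inStab g gam <-> gam = 1%:M.
Proof.
move=> detg NP1 NP2 gam.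
split=> [[Ggam [u [/inU_unip[a [b [c ->]]] E]]] | ->]; last first.
  split; first by have := inGamma_unip 0 0 0; rewrite mulr0z unip0.
  exists 1%:M; split; last by rewrite mul1mx mulmx1.
  by apply/inU_unip; exists 0, 0, 0; rewrite unip0.
apply/eqP/negPn/negP => gam1.
have [c0|c0] := eqVneq c 0; last exact: NP1 (GammaP1_of_stab detg Ggam E c0).
apply: NP2; apply: (GammaP2_of_scaled_int_col0 detg).
by apply: (stab_scaled_int_col0_c0 detg Ggam _ gam1); rewrite E c0.
Qed.

End RealMatrices.

Theorem lemma5p17 (R : realType) :
  (forall g : 'M[R]_3, inPplus g ->
     forall gam, inStab g gam <-> inH3Z gam) /\
  (forall g : 'M[R]_3, inP1plus g -> ~ inGammaTimes (@inP R) g ->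
     forall gam, inStab g gam <-> inGamma1 gam) /\
  (forall g : 'M[R]_3, inP2plus g -> ~ inGammaTimes (@inP R) g ->
     forall gam, inStab g gam <-> inGamma2 gam) /\
  (forall g : 'M[R]_3, inSL3 g ->
     ~ inGammaTimes (@inP1 R) g -> ~ inGammaTimes (@inP2 R) g ->
     forall gam, inStab g gam <-> gam = 1%:M).
Proof.
split; first by move=> g [Pg _]; exact: stab_P.
split; first by move=> g [P1g _]; exact: stab_P1.
split; first by move=> g [P2g _]; exact: stab_P2.
exact: stab_trivial.
Qed.
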